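(* Let $A$ be a calibrated $R$-superalgebra and $V$ a calibrated $A$-supermodule. Then $\tilde\Gamma^dV\subseteq\Gamma^dV$ is a $\tilde\Gamma^dA$-submodule, i.e. $\eta\, y\in\tilde\Gamma^dV$ for all $\eta\in\tilde\Gamma^dA$ and $y\in\tilde\Gamma^dV$.
   Context: Let $R$ be a principal ideal domain of characteristic $0$. A calibrated $R$-supermodule is a free $R$-supermodule $V=V_{\bar0}\oplus V_{\bar1}$ of finite rank with a decomposition $V_{\bar0}=V_{\mathfrak a}\oplus V_{\mathfrak c}$ into free $R$-submodules; choose bases $B_{\mathfrak a},B_{\mathfrak c},B_{\bar1}$, let $B$ be their union, fix a total order on $B$. $\mathfrak S_d$ acts on $V^{\otimes d}$ by $(v_1\otimes\cdots\otimes v_d)^\sigma=(-1)^{\langle\sigma;\mathbf v\rangle}v_{\sigma1}\otimes\cdots\otimes v_{\sigma d}$, $\langle\sigma;\mathbf v\rangle$ = number of $k<l$ with $\sigma^{-1}k>\sigma^{-1}l$ and $v_k,v_l$ odd; $\Gamma^dV$ = invariants. For $\mathbf b\in B^d$: $\langle\mathbf b\rangle$ = number of $k<l$ with $b_k,b_l\in B_{\bar1}$, $b_k>b_l$; $[\mathbf b]^!_{\mathfrak c}=\prod_{b\in B_{\mathfrak c}}\#\{k:b_k=b\}!$; $\mathrm{Seq}(B,d)$ = tuples in which only elements of $B_{\mathfrak a}\sqcup B_{\mathfrak c}$ may repeat; $x_{\mathbf b}=\sum(-1)^{\langle\mathbf b\rangle+\langle\mathbf b'\rangle}b'_1\otimes\cdots\otimes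 b'_d$ over distinct place-permutations $\mathbf b'$ of $\mathbf b$; $y_{\mathbf b}=[\mathbf b]^!_{\mathfrak c}x_{\mathbf b}$; $\tilde\Gamma^dV=\mathrm{span}_R\{y_{\mathbf b}:\mathbf b\in\mathrm{Seq}(B,d)\}$. A calibrated $R$-superalgebra is an $R$-superalgebra $A$, free of finite rank, with a decomposition $A_{\bar0}=\mathfrak a\oplus\mathfrak c$ into free $R$-submodules such that $\mathfrak a$ is a unital subalgebra; regarding $A$ as a calibrated supermodule gives $\tilde\Gamma^dA\subseteq\Gamma^dA\subseteq A^{\otimes d}$, where $A^{\otimes d}$ is a superalgebra with $(a_1\otimes\cdots\otimes a_d)(b_1\otimes\cdots\otimes b_d)=(-1)^{\langle\mathbf a,\mathbf b\rangle}a_1b_1\otimes\cdots\otimes a_db_d$ ($\langle\mathbf a,\mathbf b\rangle$ = number of $k>l$ with $a_k,b_l$ odd); $\tilde\Gamma^dA$ is a unital subsuperalgebra of $\Gamma^dA$. If $V$ is an $A$-supermodule then $V^{\otimes d}$ is an $A^{\otimes d}$-supermodule via $(a_1\otimes\cdots\otimes a_d)(v_1\otimes\cdots\otimes v_d)=(-1)^{\langle\mathbf a,\mathbf v\rangle}a_1v_1\otimes\cdots\otimes a_dv_d$, and $\Gamma^dV$ is a $\Gamma^dA$-submodule. A calibrated $A$-supermodule is an $A$-supermodule $V$ which is a calibrated $R$-supermodule with $\mathfrak aV_{\mathfrak a}\subseteq V_{\mathfrak a}$. *)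

(* Everything is expressed in coordinates: a free R-module of
   finite rank with a chosen (totally ordered) basis B is modelled by functions
   'I_m -> R, the tensor power V^{(x)d} by functions d.-tuple 'I_m -> R. *)
From HB Require Import structures.
From mathcomp Require Import all_boot all_order all_algebra.
Set Implicit Arguments.
Unset Strict Implicit.
Unset Printing Implicit Defensive.
Import GRing.Theory.
Local Open Scope ring_scope.

(* The calibration of a basis element: in B_a, in B_c, or odd (in B_1). *)
Inductive calib := Ca | Cc | Codd.
Definition is_odd (c : calib) : bool := if c is Codd then true else false.
Definition is_a (c : calib) : bool := if c is Ca then true else false.
Definition is_c (c : calib) : bool := if c is Cc then true else false.

Definition is_PID (R : idomainType) : Prop :=
  forall I : R -> Prop,
    I 0 -> (forall x y, I x -> I y -> I (x + y)) -> (forall r x, I x -> I (r * x)) ->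
    exists g : R, forall x, I x <-> exists r, x = r * g.

Definition char0 (R : idomainType) : Prop := forall k : nat, (k.+1)%:R != 0 :> R.

Notation vect R m := {ffun 'I_m -> R}.
Notation tens R m d := {ffun d.-tuple 'I_m -> R}.

Section Defs.
Variable R : comNzRingType.

Definition sc (aT : finType) (r : R) (f : {ffun aT -> R}) : {ffun aT -> R} :=
  [ffun x => r * f x].

Section Sym.
Variables (m d : nat) (kd : 'I_m -> calib).

Definition inv_odd (b : d.-tuple 'I_m) : nat :=
  \sum_(k < d) \sum_(l < d | [&& (k < l)%N, is_odd (kd (tnth b k)),
                                is_odd (kd (tnth b l)) & (tnth b l < tnth b k)%N]) 1.

Definition cfact (b : d.-tuple 'I_m) : nat :=
  \prod_(x : 'I_m | is_c (kd x)) (count_mem x b)`!.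

Definition in_Seq (b : d.-tuple 'I_m) : bool :=
  [forall x : 'I_m, is_odd (kd x) ==> (count_mem x b <= 1)%N].

(* x_b = sum over distinct place permutations b' of b of (-1)^(<b>+<b'>) b' *)
Definition x_vec (b : d.-tuple 'I_m) : tens R m d :=
  [ffun t : d.-tuple 'I_m =>
     if perm_eq t b then (-1) ^+ (inv_odd b + inv_odd t) else 0].

Definition y_vec (b : d.-tuple 'I_m) : tens R m d := sc (cfact b)%:R (x_vec b).

Definition in_tGamma (v : tens R m d) : Prop :=
  exists f : d.-tuple 'I_m -> R, v = \sum_(b | in_Seq b) sc (f b) (y_vec b).
End Sym.

Section Alg.
Variables (n m : nat) (kdA : 'I_n -> calib) (mulA : 'I_n -> 'I_n -> vect R n)
          (oneA : vect R n) (kdV : 'I_m -> calib) (act : 'I_n -> 'I_m -> vect R m).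

Definition mulE (a b : vect R n) : vect R n :=
  \sum_(i : 'I_n) \sum_(j : 'I_n) sc (a i * b j) (mulA i j).
Definition actE (a : vect R n) (v : vect R m) : vect R m :=
  \sum_(i : 'I_n) \sum_(j : 'I_m) sc (a i * v j) (act i j).

(* calibrated R-superalgebra: associative unital R-superalgebra (parity
   preserving multiplication), with A_0 = a (+) c where a = span B_a is a
   unital subalgebra *)
Definition calibrated_superalgebra : Prop :=
  [/\ forall a b c, mulE (mulE a b) c = mulE a (mulE b c),
      forall a, mulE oneA a = a /\ mulE a oneA = a,
      forall i j k, mulA i j k != 0 -> is_odd (kdA k) = is_odd (kdA i) (+) is_odd (kdA j),
      forall k, oneA k != 0 -> is_a (kdA k)
    & forall i j k, is_a (kdA i) -> is_a (kdA j) -> mulA i j k != 0 -> is_a (kdA k)].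

Definition calibrated_supermodule : Prop :=
  [/\ forall a b v, actE (mulE a b) v = actE a (actE b v),
      forall v, actE oneA v = v,
      forall i j k, act i j k != 0 -> is_odd (kdV k) = is_odd (kdA i) (+) is_odd (kdV j)
    & forall i j k, is_a (kdA i) -> is_a (kdV j) -> act i j k != 0 -> is_a (kdV k)].

Variable d : nat.
Definition mix_sign (s : d.-tuple 'I_n) (t : d.-tuple 'I_m) : nat :=
  \sum_(k < d) \sum_(l < d | [&& (l < k)%N, is_odd (kdA (tnth s k)) & is_odd (kdV (tnth t l))]) 1.

Definition tens_act (eta : tens R n d) (y : tens R m d) : tens R m d :=
  \sum_(s : d.-tuple 'I_n) \sum_(t : d.-tuple 'I_m)
     sc (eta s * y t) [ffun u : d.-tuple 'I_m =>
        (-1) ^+ (mix_sign s t) * \prod_(k < d) act (tnth s k) (tnth t k) (tnth u k)].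
End Alg.
End Defs.

From HB Require Import structures.
From mathcomp Require Import all_boot all_order all_algebra all_fingroup ring.
Set Implicit Arguments.
Unset Strict Implicit.
Unset Printing Implicit Defensive.
Import Order.TTheory GRing.Theory.

(* A tensor lies in \tilde\Gamma^d V as soon as it is supersymmetric (a place
   permutation acts by its Koszul sign) and its coordinate at every tuple u is
   divisible by [u]^!_c: in characteristic 0 supersymmetry kills the
   coordinates at tuples outside Seq(B,d), and it ties every other coordinate
   to the one at the sorted rearrangement.  The product of two supersymmetric
   tensors is supersymmetric because the action of A respects parity, so only
   divisibility of the u-coordinate of y_s y_t remains.  Multiplied by the
   orders of the stabilisers of s and t, it becomes a sum over pairs of place
   permutations, on which Stab_a(s) x Stab_a(t) x Stab_c(u) acts preserving the
   summand, and freely on its support since a V_a is contained in V_a.  The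
   order of this group is [u]^!_c times the orders of Stab_a(s) and Stab_a(t),
   and these cancel against the stabiliser orders up to the factor
   [s]^!_c [t]^!_c that y_s y_t already carries. *)

Lemma big_addb_involution (T : finType) (phi : T -> T) (F : T -> bool) :
  involutive phi -> (forall x, F (phi x) = F x) -> (forall x, F x -> phi x != x) ->
  \big[addb/false]_x F x = false.
Proof.
move=> phiK Fphi Ffree; pose r (x : T) := enum_rank x.
have -> : \big[addb/false]_x F x =
    \big[addb/false]_x ((r x < r (phi x))%N && F x)
    (+) \big[addb/false]_x ((r (phi x) < r x)%N && F x).
  rewrite -big_split; apply: eq_bigr => x _ /=.
  case Fx: (F x); rewrite ?andbF //=.
  have := Ffree x Fx; case: ltngtP => //= /val_inj /enum_rank_inj e.
  by rewrite -{1}e eqxx.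
rewrite [X in _ (+) X](reindex_inj (inv_inj phiK)) /=.
by under [X in _ (+) X]eq_bigr => x _ do rewrite phiK Fphi; rewrite addbb.
Qed.

Definition xor_pairs d (E : 'I_d -> 'I_d -> bool) : bool :=
  \big[addb/false]_(i < d) \big[addb/false]_(j < d) E i j.

Lemma odd_sum_pairs d (E : 'I_d -> 'I_d -> bool) :
  odd (\sum_(k < d) \sum_(l < d | E k l) 1) = xor_pairs E.
Proof.
rewrite /xor_pairs (big_morph odd oddD (erefl (odd 0))); apply: eq_bigr => k _.
rewrite (big_morph odd oddD (erefl (odd 0))) big_mkcond /=.
by apply: eq_bigr => l _; case: (E k l).
Qed.

Lemma xor_pairs_addb d (E F : 'I_d -> 'I_d -> bool) :
  xor_pairs (fun i j => E i j (+) F i j) = xor_pairs E (+) xor_pairs F.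
Proof. by rewrite /xor_pairs -big_split; apply: eq_bigr => i _; rewrite -big_split. Qed.

Lemma xor_pairs_perm d (p : 'S_d) (E : 'I_d -> 'I_d -> bool) :
  xor_pairs (fun k l => E (p k) (p l)) = xor_pairs E.
Proof.
rewrite /xor_pairs [RHS](reindex_inj (@perm_inj _ p)); apply: eq_bigr => k _.
by rewrite [RHS](reindex_inj (@perm_inj _ p)).
Qed.

Lemma xor_pairs_sym d (F : 'I_d -> 'I_d -> bool) :
  (forall i, F i i = false) -> (forall i j : 'I_d, (i < j)%N -> F i j = F j i) ->
  xor_pairs F = false.
Proof.
move=> Fdiag Fsym; rewrite /xor_pairs pair_big /=.
apply: (@big_addb_involution _ (fun x => (x.2, x.1))) => [[i j] // | [i j] /= | [i j] /=].
  by case: (ltngtP i j) => [/Fsym | /Fsym | /val_inj ->].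
by move=> Fij; apply/eqP => -[e _]; rewrite e Fdiag in Fij.
Qed.

Lemma ltn_flip (x y : nat) : x != y -> (y < x)%N = ~~ (x < y)%N.
Proof. by move=> ne; rewrite ltnNge leq_eqVlt (negbTE ne). Qed.

Definition place (T : Type) d (t : d.-tuple T) (p : 'S_d) : d.-tuple T :=
  [tuple tnth t (p k) | k < d].

Lemma tnth_place (T : Type) d (t : d.-tuple T) p k : tnth (place t p) k = tnth t (p k).
Proof. exact: tnth_mktuple. Qed.

Lemma place1 (T : Type) d (t : d.-tuple T) : place t 1%g = t.
Proof. by apply: eq_from_tnth => k; rewrite tnth_place perm1. Qed.

Lemma placeM (T : Type) d (t : d.-tuple T) p q : place (place t p) q = place t (q * p)%g.
Proof. by apply: eq_from_tnth => k; rewrite !tnth_place permM. Qed.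

Lemma place_inj (T : Type) d (p : 'S_d) : injective (fun t : d.-tuple T => place t p).
Proof. by move=> s t /= /(congr1 (fun u => place u p^-1%g)); rewrite !placeM mulVg !place1. Qed.

Lemma perm_place (T : eqType) d (t : d.-tuple T) p : perm_eq (place t p) t.
Proof. by apply/tuple_permP; exists p. Qed.

Definition inv_marked d (p : 'S_d) (b : 'I_d -> bool) : nat :=
  \sum_(k < d) \sum_(l < d | [&& (k < l)%N, (p l < p k)%N, b (p k) & b (p l)]) 1.

Lemma eq_inv_marked d (p : 'S_d) (b1 b2 : 'I_d -> bool) :
  b1 =1 b2 -> inv_marked p b1 = inv_marked p b2.
Proof. by move=> e; apply: eq_bigr => k _; apply: eq_bigl => l; rewrite !e. Qed.

Lemma odd_inv_marked d (p : 'S_d) (b : 'I_d -> bool) :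
  odd (inv_marked p b) =
  xor_pairs (fun i j => [&& ((p^-1)%g i < (p^-1)%g j)%N, (j < i)%N, b i & b j]).
Proof.
rewrite odd_sum_pairs -[RHS](xor_pairs_perm p).
by apply: eq_bigr => k _; apply: eq_bigr => l _; rewrite /= !permK.
Qed.

Lemma inv_marked_fix d (p : 'S_d) (b : 'I_d -> bool) :
  (forall k, p k != k -> b k = false) -> inv_marked p b = 0%N.
Proof.
move=> bfix; rewrite /inv_marked big1 // => k _; rewrite big_pred0 // => l.
apply/and4P => -[kl plk bk bl].
have fixed j : b (p j) -> p j = j.
  by move=> bpj; apply: (@perm_inj _ p); apply: contraTeq bpj => /bfix ->.
by rewrite (fixed _ bk) (fixed _ bl) ltnNge ltnW in plk.
Qed.

Lemma odd_inv_marked_tperm d (i j : 'I_d) (b : 'I_d -> bool) :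
  i != j -> b i -> b j -> odd (inv_marked (tperm i j) b).
Proof.
wlog lij : i j / (i < j)%N.
  move=> W nij bi bj; case: (ltngtP i j) => [l|l|/val_inj e].
  - exact: W.
  - by rewrite tpermC; apply: W => //; rewrite eq_sym.
  - by rewrite e eqxx in nij.
move=> nij bi bj; set pi := tperm i j.
have bpi x : b (pi x) = b x by rewrite /pi; case: tpermP => [->|->|]; rewrite ?bi ?bj.
have piK : involutive pi by move=> x; rewrite /pi tpermK.
rewrite /inv_marked odd_sum_pairs.
set K := fun k l : 'I_d => [&& (k < l)%N, (pi l < pi k)%N, b (pi k) & b (pi l)].
(* The pairs [(k, l)] with [l != pi k] cancel under [(k, l) |-> (pi l, pi k)]. *)
have -> : xor_pairs K = \big[addb/false]_k K k (pi k)
    (+) xor_pairs (fun k l => (l != pi k) && K k l).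
  rewrite /xor_pairs -big_split; apply: eq_bigr => k _ /=.
  rewrite (bigD1 (pi k)) //=; congr (_ (+) _); rewrite big_mkcond.
  by apply: eq_bigr => l _; case: (l != pi k).
have -> : xor_pairs (fun k l => (l != pi k) && K k l) = false.
  rewrite /xor_pairs pair_big /=.
  apply: (@big_addb_involution _ (fun x => (pi x.2, pi x.1))).
  - by case=> x y /=; rewrite !piK.
  - case=> x y /=; rewrite piK (eq_sym (pi x)) /K !piK !bpi.
    by case: (y != pi x); case: (x < y)%N; case: (pi y < pi x)%N; case: (b x); case: (b y).
  - case=> x y /= /andP [ne _]; apply/negP => /eqP [e1 _].
    by rewrite -e1 piK eqxx in ne.
rewrite addbF (bigD1 i) //= big1 => [|k nki]; rewrite /K.
  by rewrite /pi tpermL tpermR lij bi bj.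
rewrite /pi; case: tpermP => [e|e|_ _].
- by rewrite e eqxx in nki.
- by rewrite e tpermL ltnNge ltnW.
- by rewrite ltnn.
Qed.

Lemma count_mem_tnth (T : eqType) d (t : d.-tuple T) x :
  count_mem x t = (\sum_(k < d | tnth t k == x) 1)%N.
Proof. by rewrite -sum1_count big_tuple. Qed.

Section SuperSign.
Variables (n m d : nat) (kdA : 'I_n -> calib) (kd : 'I_m -> calib).

Lemma in_Seq_perm (t b : d.-tuple 'I_m) : perm_eq t b -> in_Seq kd t = in_Seq kd b.
Proof. by move=> /seq.permP tb; apply: eq_forallb => x; rewrite tb. Qed.

Lemma in_Seq_tnth_inj (t : d.-tuple 'I_m) i j :
  in_Seq kd t -> is_odd (kd (tnth t i)) -> tnth t i = tnth t j -> i = j.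
Proof.
move=> /forallP St oi tij; apply/eqP; apply: contraT => nij.
have := St (tnth t i); rewrite oi count_mem_tnth (bigD1 i) ?eqxx //=.
by rewrite (bigD1 j) //= tij eqxx eq_sym nij.
Qed.

Lemma odd_inv_odd_place (t : d.-tuple 'I_m) (p : 'S_d) : in_Seq kd t ->
  odd (inv_odd kd (place t p)) =
  odd (inv_odd kd t) (+) odd (inv_marked p (fun k => is_odd (kd (tnth t k)))).
Proof.
move=> St; rewrite /inv_odd odd_inv_marked !odd_sum_pairs.
set O := fun k => is_odd (kd (tnth t k)).
have -> : xor_pairs (fun k l => [&& (k < l)%N, is_odd (kd (tnth (place t p) k)),
     is_odd (kd (tnth (place t p) l)) & (tnth (place t p) l < tnth (place t p) k)%N])
  = xor_pairs (fun i j => [&& ((p^-1)%g i < (p^-1)%g j)%N, O i, O j & (tnth t j < tnth t i)%N]).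
  rewrite -[RHS](xor_pairs_perm p); apply: eq_bigr => k _; apply: eq_bigr => l _.
  by rewrite /= !permK !tnth_place.
apply/eqP; rewrite -negb_add !addbA -!xor_pairs_addb; apply/negbT/xor_pairs_sym.
  by move=> i /=; rewrite !ltnn ?andbF.
move=> i j lij; have nij : i != j by rewrite neq_ltn lij.
have pnij : (p^-1)%g i != (p^-1)%g j by rewrite (inj_eq (@perm_inj _ _)).
have gji : (j < i)%N = false by rewrite ltnNge ltnW.
rewrite (ltn_flip pnij) lij gji /= /O.
case Oi: (is_odd _); case Oj: (is_odd _) => //=; rewrite ?andbF //.
have tnij : tnth t i != tnth t j by apply/eqP => /(in_Seq_tnth_inj St Oi) /eqP; apply/negP.
rewrite (ltn_flip tnij).
by case: (_ < _)%N; case: (_ < _)%N.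
Qed.

Lemma odd_mix_sign_place (s : d.-tuple 'I_n) (t : d.-tuple 'I_m) (p : 'S_d) :
  let P k := is_odd (kdA (tnth s k)) in let Q k := is_odd (kd (tnth t k)) in
  odd (mix_sign kdA kd (place s p) (place t p)) =
  odd (mix_sign kdA kd s t) (+) odd (inv_marked p P) (+) odd (inv_marked p Q)
    (+) odd (inv_marked p (fun k => P k (+) Q k)).
Proof.
move=> P Q; rewrite !odd_inv_marked /mix_sign !odd_sum_pairs.
have -> : xor_pairs (fun k l => [&& (l < k)%N, is_odd (kdA (tnth (place s p) k))
                           & is_odd (kd (tnth (place t p) l))])
  = xor_pairs (fun i j => [&& ((p^-1)%g j < (p^-1)%g i)%N, P i & Q j]).
  rewrite -[RHS](xor_pairs_perm p); apply: eq_bigr => k _; apply: eq_bigr => l _.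
  by rewrite /= !permK !tnth_place.
apply/eqP; rewrite -negb_add !addbA -!xor_pairs_addb; apply/negbT/xor_pairs_sym.
  by move=> i /=; rewrite !ltnn ?andbF.
move=> i j lij; have pnij : (p^-1)%g i != (p^-1)%g j.
  by rewrite (inj_eq (@perm_inj _ _)) neq_ltn lij.
have gji : (j < i)%N = false by rewrite ltnNge ltnW.
rewrite (ltn_flip pnij) lij gji /= /P /Q.
by case: (_ < _)%N; case: (is_odd (kdA (tnth s i))); case: (is_odd (kdA (tnth s j)));
  case: (is_odd (kd (tnth t i))); case: (is_odd (kd (tnth t j))).
Qed.

End SuperSign.

Section Stabiliser.
Variables (T : finType) (d : nat) (t : d.-tuple T).

Definition stab_on (P : pred T) : {set 'S_d} :=
  [set p : 'S_d | [forall k, (tnth t (p k) == tnth t k) && (P (tnth t k) || (p k == k))]].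

Lemma stab_onP (P : pred T) (p : 'S_d) :
  reflect (forall k, tnth t (p k) = tnth t k /\ (P (tnth t k) \/ p k = k)) (p \in stab_on P).
Proof.
rewrite inE; apply: (iffP forallP) => [H k | H k].
  by have /andP [/eqP -> /orP [->|/eqP ->]] := H k; split => //; [left | right].
by have [-> [->|->]] := H k; rewrite !eqxx ?orbT.
Qed.

Lemma stab_on_group_set (P : pred T) : group_set (stab_on P).
Proof.
apply/group_setP; split; first by apply/stab_onP => k; rewrite perm1; split; last right.
move=> p q /stab_onP Hp /stab_onP Hq; apply/stab_onP => k; rewrite permM.
have [tp [Pk | pk]] := Hp k; have [tq Hq'] := Hq (p k).
  by split; [rewrite tq | left].
by rewrite pk in tq Hq' *.
Qed.

Canonical stab_on_group (P : pred T) := Group (stab_on_group_set P).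

Lemma place_stab_on (P : pred T) p : p \in stab_on P -> place t p = t.
Proof. by move=> /stab_onP tp; apply: eq_from_tnth => k; rewrite tnth_place (tp k).1. Qed.

Lemma stab_onT p : (p \in stab_on predT) = (place t p == t).
Proof.
apply/idP/eqP => [/place_stab_on // | tp]; apply/stab_onP => k.
by rewrite -[in RHS]tp tnth_place; split; last left.
Qed.

Lemma stab_on_moved (P : pred T) p k : p \in stab_on P -> p k != k -> P (tnth t k).
Proof. by move=> /stab_onP tp; have [_ [// | ->]] := tp k; rewrite eqxx. Qed.

Definition positions (x : T) : {set 'I_d} := [set k | tnth t k == x].

Lemma card_positions x : #|positions x| = count_mem x t.
Proof. by rewrite count_mem_tnth -sum1_card; apply: eq_bigl => k; rewrite inE. Qed.

Lemma stab_on_cons (P : pred T) x (xs : seq T) : P x ->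
  stab_on [pred y | P y && (y \in x :: xs)] =
  (Sym (positions x) * stab_on [pred y | P y && (y \in xs)])%g.
Proof.
move=> Px; apply/setP => r; apply/idP/idP.
- move=> /stab_onP Hr.
  have rF k : (r k \in positions x) = (k \in positions x) by rewrite !inE (Hr k).1.
  have nFr : (r \in 'N(positions x | 'P))%g by apply/astabsP => k; exact: rF.
  set pi := restr_perm (positions x) r.
  have piF : perm_on (positions x) pi by apply: restr_perm_on.
  apply/mulsgP; exists pi (pi^-1 * r)%g; [by rewrite inE | | by rewrite mulKVg].
  apply/stab_onP => k; rewrite permM.
  have [Fk | Fk] := boolP (k \in positions x).
    have Fk' : (pi^-1)%g k \in positions x by rewrite (perm_closed _ (perm_onV piF)).
    by rewrite -(restr_permE nFr Fk') permKV; split; last right.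
  rewrite (out_perm (perm_onV piF)) //; have [tr Or] := Hr k; split => //.
  case: Or => [/= /andP [Pk] | ->]; last by right.
  by move: Fk; rewrite !inE => /negbTE -> /= xsk; left; apply/andP.
- case/mulsgP => pi g piF /stab_onP Hg ->; rewrite inE in piF.
  apply/stab_onP => k; rewrite permM.
  have [tg Og] := Hg (pi k).
  have [pk | npk] := eqVneq (pi k) k.
    rewrite pk in tg Og *; split => //; case: Og => [/= /andP [Pk xsk] | ->]; last by right.
    by left; rewrite /= Pk inE xsk orbT.
  have Fk : k \in positions x by apply: contraR npk => /(out_perm piF) ->; rewrite eqxx.
  have Fpk : pi k \in positions x by rewrite (perm_closed _ piF).
  move: Fk Fpk; rewrite !inE => /eqP tk /eqP tpk.
  by split; [rewrite tg tpk tk | left; rewrite tk Px eqxx].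
Qed.

Lemma Sym_positions_stab_onI (P : pred T) x (xs : seq T) : x \notin xs ->
  Sym (positions x) :&: stab_on [pred y | P y && (y \in xs)] = 1%g.
Proof.
move=> xNxs; apply/trivgP/subsetP => r /setIP [rF /stab_onP Hr]; rewrite inE in rF.
apply/set1P/permP => k; rewrite perm1; apply/eqP; apply: contraT => rk.
have /[!inE] /eqP tk : k \in positions x by apply: contraR rk => /(out_perm rF) ->; rewrite eqxx.
have [_ [/andP [_] | e]] := Hr k; last by rewrite e eqxx in rk.
by rewrite tk (negbTE xNxs).
Qed.

Lemma card_stab_on_seq (P : pred T) (xs : seq T) : uniq xs ->
  #|stab_on [pred y | P y && (y \in xs)]| = (\prod_(x <- xs | P x) (count_mem x t)`!)%N.
Proof.
elim: xs => [_ | x xs IH /andP [xNxs uxs]].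
  have -> : stab_on [pred y | P y && (y \in [::])] = 1%g.
    apply/trivgP/subsetP => r /stab_onP Hr; apply/set1P/permP => k; rewrite perm1.
    by have [_ [|//]] := Hr k; rewrite /= andbF.
  by rewrite big_nil cards1.
rewrite big_cons; case Px: (P x); last first.
  rewrite -IH //; apply: eq_card => r; rewrite !inE.
  by apply: eq_forallb => k; rewrite /= inE; case: (tnth t k =P x) => [->|]; rewrite ?Px.
rewrite stab_on_cons // TI_cardMg; last exact: Sym_positions_stab_onI.
by rewrite card_Sym card_positions IH.
Qed.

Lemma card_stab_on (P : pred T) : #|stab_on P| = (\prod_(x | P x) (count_mem x t)`!)%N.
Proof.
rewrite -card_stab_on_seq ?index_enum_uniq //; apply: eq_card => r; rewrite !inE.
by apply: eq_forallb => k; rewrite /= mem_index_enum andbT.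
Qed.
End Stabiliser.

Local Open Scope ring_scope.

Definition dvdr (R : comPzRingType) (c x : R) : Prop := exists r, x = c * r.

Lemma dvdr_mull (R : comPzRingType) (c a x : R) : dvdr c x -> dvdr c (a * x).
Proof. by case=> r ->; exists (a * r); rewrite mulrCA. Qed.

Lemma dvdr_sum (R : comPzRingType) (c : R) (I : finType) (P : pred I) (F : I -> R) :
  (forall i, P i -> dvdr c (F i)) -> dvdr c (\sum_(i | P i) F i).
Proof.
move=> dvdF; apply: big_ind => //; first by exists 0; rewrite mulr0.
by move=> x y [r ->] [r' ->]; exists (r + r'); rewrite mulrDr.
Qed.

Lemma signr_odd_eq (R : pzRingType) (a b : nat) : odd a = odd b -> (-1) ^+ a = (-1) ^+ b :> R.
Proof. by move=> ab; rewrite -signr_odd ab signr_odd. Qed.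

Section Supersymmetric.
Variables (R : comNzRingType) (m d : nat) (kd : 'I_m -> calib).

(* The invariance under place permutations that defines \Gamma^d V. *)
Definition supersym (v : tens R m d) : Prop :=
  forall u (p : 'S_d),
    v (place u p) = (-1) ^+ inv_marked p (fun k => is_odd (kd (tnth u k))) * v u.

Lemma x_vec_supersym b : in_Seq kd b -> supersym (x_vec R kd b).
Proof.
move=> Sb u p; rewrite /x_vec !ffunE (permPl (perm_place u p)).
case ub: (perm_eq u b); last by rewrite mulr0.
rewrite -exprD; apply: signr_odd_eq.
rewrite !oddD odd_inv_odd_place; last by rewrite (in_Seq_perm _ ub).
by case: (odd (inv_odd kd b)); case: (odd (inv_odd kd u)); case: (odd (inv_marked _ _)).
Qed.

Lemma supersym_sc r v : supersym v -> supersym (sc r v).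
Proof. by move=> sv u p; rewrite !ffunE sv mulrCA. Qed.

Lemma supersym_sum (I : finType) (P : pred I) (F : I -> tens R m d) :
  (forall i, P i -> supersym (F i)) -> supersym (\sum_(i | P i) F i).
Proof.
move=> sF; apply: big_ind => //; first by move=> u p; rewrite !ffunE mulr0.
by move=> v w sv sw u p; rewrite !ffunE sv sw mulrDr.
Qed.

Lemma tGamma_supersym v : in_tGamma kd v -> supersym v.
Proof.
by case=> f ->; apply: supersym_sum => b Sb; do 2 apply: supersym_sc; exact: x_vec_supersym.
Qed.
End Supersymmetric.

Section TensorAction.
Variables (R : comNzRingType) (n m d : nat) (kdA : 'I_n -> calib) (kdV : 'I_m -> calib)
  (act : 'I_n -> 'I_m -> vect R m).

Lemma tens_actE (eta : tens R n d) (y : tens R m d) u :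
  tens_act kdA kdV act eta y u =
  \sum_s \sum_t eta s * y t * ((-1) ^+ mix_sign kdA kdV s t *
     \prod_(k < d) act (tnth s k) (tnth t k) (tnth u k)).
Proof.
rewrite /tens_act sum_ffunE; apply: eq_bigr => s _; rewrite sum_ffunE.
by apply: eq_bigr => t _; rewrite !ffunE.
Qed.

Lemma tens_act_suml (I : finType) (P : pred I) (f : I -> R) (v : I -> tens R n d)
    (w : tens R m d) u :
  tens_act kdA kdV act (\sum_(i | P i) sc (f i) (v i)) w u =
  \sum_(i | P i) f i * tens_act kdA kdV act (v i) w u.
Proof.
rewrite tens_actE.
under eq_bigr => s _ do under eq_bigr => t _ do rewrite sum_ffunE !mulr_suml.
under eq_bigr => s _ do rewrite exchange_big.
rewrite exchange_big; apply: eq_bigr => i _.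
rewrite tens_actE mulr_sumr; apply: eq_bigr => s _.
by rewrite mulr_sumr; apply: eq_bigr => t _; rewrite ffunE; ring.
Qed.

Lemma tens_act_sumr (I : finType) (P : pred I) (f : I -> R) (v : I -> tens R m d)
    (w : tens R n d) u :
  tens_act kdA kdV act w (\sum_(i | P i) sc (f i) (v i)) u =
  \sum_(i | P i) f i * tens_act kdA kdV act w (v i) u.
Proof.
rewrite tens_actE.
under eq_bigr => s _ do under eq_bigr => t _ do rewrite sum_ffunE mulr_sumr mulr_suml.
under eq_bigr => s _ do rewrite exchange_big.
rewrite exchange_big; apply: eq_bigr => i _.
rewrite tens_actE mulr_sumr; apply: eq_bigr => s _.
by rewrite mulr_sumr; apply: eq_bigr => t _; rewrite ffunE; ring.
Qed.

Hypothesis act_parity : forall i j k, act i j k != 0 ->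
  is_odd (kdV k) = is_odd (kdA i) (+) is_odd (kdV j).

Lemma act_parity_prod (s : d.-tuple 'I_n) (t u : d.-tuple 'I_m) k :
  \prod_(l < d) act (tnth s l) (tnth t l) (tnth u l) != 0 ->
  is_odd (kdV (tnth u k)) = is_odd (kdA (tnth s k)) (+) is_odd (kdV (tnth t k)).
Proof.
by move=> nz; apply: act_parity; apply: contraNneq nz => z; rewrite (bigD1 k) //= z mul0r.
Qed.

Lemma tens_act_supersym (eta : tens R n d) (y : tens R m d) :
  supersym kdA eta -> supersym kdV y -> supersym kdV (tens_act kdA kdV act eta y).
Proof.
move=> seta sy u p; rewrite !tens_actE mulr_sumr.
rewrite (reindex_inj (@place_inj _ _ p)); apply: eq_bigr => s _.
rewrite mulr_sumr (reindex_inj (@place_inj _ _ p)); apply: eq_bigr => t _ /=.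
rewrite seta sy.
have -> : \prod_(k < d) act (tnth (place s p) k) (tnth (place t p) k) (tnth (place u p) k)
    = \prod_(k < d) act (tnth s k) (tnth t k) (tnth u k).
  by rewrite [RHS](reindex_inj (@perm_inj _ p)); apply: eq_bigr => k _; rewrite !tnth_place.
set Pr := \prod_(k < d) _; have [->|nz] := eqVneq Pr 0; first by rewrite !mulr0.
set ep := inv_marked p (fun k => is_odd (kdV (tnth u k))).
set es := inv_marked p (fun k => is_odd (kdA (tnth s k))).
set et := inv_marked p (fun k => is_odd (kdV (tnth t k))).
have sign : (-1) ^+ es * (-1) ^+ et * (-1) ^+ mix_sign kdA kdV (place s p) (place t p)
    = (-1) ^+ ep * (-1) ^+ mix_sign kdA kdV s t :> R.
  rewrite -!exprD; apply: signr_odd_eq; rewrite !oddD odd_mix_sign_place /= -/es -/et.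
  rewrite (@eq_inv_marked _ _ _ (fun k => is_odd (kdV (tnth u k)))) -/ep; last first.
    by move=> k; rewrite (act_parity_prod k nz).
  by case: (odd ep); case: (odd es); case: (odd et); case: (odd (mix_sign _ _ _ _)).
transitivity ((-1) ^+ es * (-1) ^+ et * (-1) ^+ mix_sign kdA kdV (place s p) (place t p)
  * (eta s * y t * Pr)); first by ring.
by rewrite sign; ring.
Qed.
End TensorAction.

Lemma count_mem_gt1 (T : eqType) d (t : d.-tuple T) x : (1 < count_mem x t)%N ->
  exists i j, [/\ i != j, tnth t i = x & tnth t j = x].
Proof.
rewrite count_mem_tnth.
have [i /eqP ti | none] := pickP (fun k => tnth t k == x); last by rewrite big_pred0.
rewrite (bigD1 i) ?ti ?eqxx //= ltnS.
have [j /andP [/eqP tj ji] _ | none] := pickP (fun k => (tnth t k == x) && (k != i)).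
  by exists i, j; rewrite eq_sym.
by rewrite big_pred0.
Qed.

Section Characterisation.
Variables (R : idomainType) (m d : nat) (kd : 'I_m -> calib).
Hypothesis two_neq0 : 2 != 0 :> R.

Lemma supersym_notin_Seq (v : tens R m d) u : supersym kd v -> ~~ in_Seq kd u -> v u = 0.
Proof.
move=> sv; rewrite negb_forall => /existsP [x]; rewrite negb_imply -ltnNge.
case/andP => ox /count_mem_gt1 [i [j [nij ui uj]]].
have fix_u : place u (tperm i j) = u.
  by apply: eq_from_tnth => k; rewrite tnth_place; case: tpermP => [->|->|//]; rewrite ui uj.
have := sv u (tperm i j); rewrite fix_u -signr_odd odd_inv_marked_tperm ?ui ?uj //.
rewrite expr1 mulN1r => /eqP; rewrite -addr_eq0 -mulr2n -mulr_natl mulf_eq0.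
by rewrite (negbTE two_neq0) => /eqP.
Qed.

Lemma supersym_dvd_in_tGamma (v : tens R m d) :
  supersym kd v -> (forall u, dvdr (cfact kd u)%:R (v u)) -> in_tGamma kd v.
Proof.
move=> sv /fin_all_exists [q vq].
exists (fun b : d.-tuple 'I_m => if sorted <=%O b then q b else 0).
apply/ffunP => t; rewrite sum_ffunE.
have term b : in_Seq kd b ->
    sc (if sorted <=%O b then q b else 0) (y_vec R kd b) t =
    if sorted <=%O b && perm_eq t b then (-1) ^+ (inv_odd kd b + inv_odd kd t) * v b
    else 0.
  move=> Sb; rewrite /y_vec /x_vec !ffunE.
  case: (sorted _ b) => /=; last by rewrite mul0r.
  by case: (perm_eq t b); rewrite ?mulr0 // vq; ring.
rewrite (eq_bigr _ term).
have [St | NSt] := boolP (in_Seq kd t); last first.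
  rewrite supersym_notin_Seq // big1 // => b Sb.
  by case tb: (perm_eq t b); rewrite ?andbF //; rewrite (in_Seq_perm _ tb) Sb in NSt.
set b0 := sort_tuple <=%O t.
have tb0 : perm_eq t b0 by rewrite perm_sym perm_sort.
have sb0 : sorted <=%O b0 by apply/sort_sorted/le_total.
have Sb0 : in_Seq kd b0 by rewrite -(in_Seq_perm _ tb0).
rewrite (bigD1 b0) //= sb0 tb0 big1 ?addr0; last first.
  move=> b /andP [Sb nb]; case sb: (sorted _ b) => //=; case tb: (perm_eq t b) => //=.
  suff e : b = b0 by rewrite e eqxx in nb.
  apply: val_inj; apply: (sorted_eq le_trans le_anti) => //.
  by rewrite -(permPl tb).
case/tuple_permP: tb0 => p tp.
have -> : t = place b0 p by apply: val_inj; rewrite /= tp.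
rewrite sv; congr (_ * _); apply: signr_odd_eq.
by rewrite oddD odd_inv_odd_place // addKb.
Qed.
End Characterisation.

Lemma dvdr_sum_free_action (gT : finGroupType) (X : finType) (to : {action gT &-> X})
    (H : {group gT}) (R : comPzRingType) (F : X -> R) :
  (forall x h, h \in H -> F (to x h) = F x) ->
  (forall x h, h \in H -> F x != 0 -> to x h = x -> h = 1%g) ->
  dvdr #|H|%:R (\sum_x F x).
Proof.
move=> Finv Ffree.
have actsH : [acts H, on [set: X] | to].
  by apply/subsetP => h _; rewrite !inE; apply/subsetP => x _; rewrite !inE.
have /and3P [/eqP covX tiX _] := orbit_partition actsH.
rewrite (eq_bigl [in [set: X]]) => [|x]; last by rewrite inE.
rewrite -covX big_trivIset //; apply: dvdr_sum => _ /imsetP [x _ ->].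
have -> : \sum_(y in orbit to H x) F y = \sum_(y in orbit to H x) F x.
  by apply: eq_bigr => _ /orbitP [h hH <-]; exact: Finv.
rewrite sumr_const; have [-> | nz] := eqVneq (F x) 0.
  by exists 0; rewrite mul0rn mulr0.
have freex : 'C_H[x | to]%g = 1%g.
  apply/trivgP/subsetP => h /setIP [hH /astab1P hx].
  by apply/set1P; exact: Ffree hH nz hx.
by exists (F x); rewrite card_orbit freex indexg1 mulr_natl.
Qed.

Lemma sum_place_perm (T : finType) d (t0 : d.-tuple T) (R : pzRingType)
    (F : d.-tuple T -> R) :
  \sum_(p : 'S_d) F (place t0 p) =
  #|stab_on t0 predT|%:R * \sum_(s : d.-tuple T | perm_eq s t0) F s.
Proof.
rewrite (partition_big (place t0) (fun s => perm_eq s t0)) /=; last first.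
  by move=> p _; exact: perm_place.
rewrite mulr_sumr; apply: eq_bigr => s /tuple_permP [q sq].
have {sq} -> : s = place t0 q by apply: val_inj; rewrite /= sq.
have -> : \sum_(p | place t0 p == place t0 q) F (place t0 p) =
          \sum_(p in (q *: stab_on t0 predT)%g) F (place t0 q).
  apply: eq_big => [p | p /eqP -> //].
  by rewrite mem_lcoset stab_onT -(inj_eq (@place_inj _ _ q^-1%g)) !placeM mulVg place1.
by rewrite sumr_const card_lcoset mulr_natl.
Qed.

Lemma is_c_odd (c : calib) : is_c c -> is_odd c = false. Proof. by case: c. Qed.
Lemma is_a_c (c : calib) : is_a c -> is_c c = false. Proof. by case: c. Qed.

Lemma card_stab_on_Seq m d (kd : 'I_m -> calib) (b : d.-tuple 'I_m) : in_Seq kd b ->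
  #|stab_on b predT| = (#|stab_on b (fun x => is_a (kd x))| * cfact kd b)%N.
Proof.
move=> /forallP Sb; rewrite !card_stab_on (bigID (fun x => is_a (kd x))) /=; congr (_ * _)%N.
rewrite big_mkcond [RHS]big_mkcond; apply: eq_bigr => x _ /=.
by have := Sb x; case: (kd x) => //= c1; case: (count_mem x b) c1 => [|[|]].
Qed.

Section PairsAction.
Variable d : nat.

Definition pairs_act (x : 'S_d * 'S_d) (g : ('S_d * 'S_d) * 'S_d) : 'S_d * 'S_d :=
  ((g.2^-1 * x.1 * g.1.1)%g, (g.2^-1 * x.2 * g.1.2)%g).

Lemma pairs_act1 : pairs_act^~ 1%g =1 id.
Proof. by case=> p q; rewrite /pairs_act /= invg1 !mul1g !mulg1. Qed.

Lemma pairs_actM x : act_morph pairs_act x.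
Proof. by move=> g h; case: x => p q; rewrite /pairs_act /= !invMg !mulgA. Qed.

Definition pairs_action := TotalAction pairs_act1 pairs_actM.
End PairsAction.

Section BasisProducts.
Variables (R : idomainType) (n m d : nat) (kdA : 'I_n -> calib) (kdV : 'I_m -> calib)
  (act : 'I_n -> 'I_m -> vect R m).
Hypothesis act_parity : forall i j k, act i j k != 0 ->
  is_odd (kdV k) = is_odd (kdA i) (+) is_odd (kdV j).
Hypothesis act_a : forall i j k,
  is_a (kdA i) -> is_a (kdV j) -> act i j k != 0 -> is_a (kdV k).
Hypothesis charR : char0 R.
Variables (s0 : d.-tuple 'I_n) (t0 u : d.-tuple 'I_m).
Hypotheses (Ss0 : in_Seq kdA s0) (St0 : in_Seq kdV t0).

Definition act_coef (s : d.-tuple 'I_n) (t : d.-tuple 'I_m) : R :=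
  \prod_(k < d) act (tnth s k) (tnth t k) (tnth u k).

Definition signed_coef (s : d.-tuple 'I_n) (t : d.-tuple 'I_m) : R :=
  (-1) ^+ (inv_odd kdA s0 + inv_odd kdA s + (inv_odd kdV t0 + inv_odd kdV t)
           + mix_sign kdA kdV s t) * act_coef s t.

Lemma tens_act_y_vecE : tens_act kdA kdV act (y_vec R kdA s0) (y_vec R kdV t0) u =
  (cfact kdA s0)%:R * (cfact kdV t0)%:R *
    \sum_(s : d.-tuple 'I_n | perm_eq s s0) \sum_(t : d.-tuple 'I_m | perm_eq t t0)
      signed_coef s t.
Proof.
rewrite tens_actE mulr_sumr [RHS]big_mkcond; apply: eq_bigr => s _.
rewrite /y_vec /x_vec !ffunE; case: (perm_eq s s0) => /=; last first.
  by rewrite big1 // => t _; rewrite mulr0 !mul0r.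
rewrite mulr_sumr [RHS]big_mkcond; apply: eq_bigr => t _; rewrite !ffunE.
case: (perm_eq t t0) => /=; last by rewrite !mulr0 mul0r.
by rewrite /signed_coef /act_coef !exprD; ring.
Qed.

Lemma sum_signed_coef_perms :
  (#|stab_on s0 predT| * #|stab_on t0 predT|)%:R *
    \sum_(s : d.-tuple 'I_n | perm_eq s s0) \sum_(t : d.-tuple 'I_m | perm_eq t t0)
      signed_coef s t =
  \sum_(p : 'S_d) \sum_(q : 'S_d) signed_coef (place s0 p) (place t0 q).
Proof.
under [RHS]eq_bigr => p _ do rewrite (sum_place_perm t0 (signed_coef (place s0 p))).
rewrite -mulr_sumr.
rewrite (sum_place_perm s0 (fun s => \sum_(t : d.-tuple 'I_m | perm_eq t t0) signed_coef s t)).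
by rewrite natrM; ring.
Qed.

Lemma signed_coef_place (s : d.-tuple 'I_n) (t : d.-tuple 'I_m) (p : 'S_d) :
  perm_eq s s0 -> perm_eq t t0 ->
  p \in stab_on u (fun j => is_c (kdV j)) ->
  signed_coef (place s p) (place t p) = signed_coef s t.
Proof.
move=> ss0 tt0 pC; rewrite /signed_coef.
have -> : act_coef (place s p) (place t p) = act_coef s t.
  have up k : tnth u (p k) = tnth u k by rewrite -tnth_place (place_stab_on pC).
  rewrite /act_coef [RHS](reindex_inj (@perm_inj _ p)); apply: eq_bigr => k _.
  by rewrite !tnth_place up.
have [-> | nz] := eqVneq (act_coef s t) 0; first by rewrite !mulr0.
congr (_ * _); apply: signr_odd_eq.
have no_odd_moved :
    inv_marked p (fun k => is_odd (kdA (tnth s k)) (+) is_odd (kdV (tnth t k))) = 0%N.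
  rewrite -(@eq_inv_marked _ _ (fun k => is_odd (kdV (tnth u k)))); last first.
    by move=> k; rewrite (act_parity_prod act_parity k nz).
  by apply: inv_marked_fix => k /(stab_on_moved pC) /is_c_odd.
rewrite !oddD odd_mix_sign_place no_odd_moved.
rewrite !odd_inv_odd_place ?(in_Seq_perm _ ss0) ?(in_Seq_perm _ tt0) //=.
by case: (odd (inv_odd kdA s0)); case: (odd (inv_odd kdA s)); case: (odd (inv_odd kdV t0));
   case: (odd (inv_odd kdV t)); case: (odd (mix_sign kdA kdV s t));
   case: (odd (inv_marked p _)); case: (odd (inv_marked p _)).
Qed.

Definition stab_triple : {group ('S_d * 'S_d) * 'S_d} :=
  setX_group (setX_group (stab_on_group s0 (fun i => is_a (kdA i)))
                         (stab_on_group t0 (fun j => is_a (kdV j))))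
             (stab_on_group u (fun j => is_c (kdV j))).

Definition coef_pairs (x : 'S_d * 'S_d) : R := signed_coef (place s0 x.1) (place t0 x.2).

Lemma coef_pairs_act x g : g \in stab_triple -> coef_pairs (pairs_act x g) = coef_pairs x.
Proof.
case: g x => [[a b] r] [p q]; rewrite !in_setX /= => /andP [/andP [aA bA] rC].
rewrite /coef_pairs /= -!placeM !(place_stab_on aA) !(place_stab_on bA).
by apply: signed_coef_place; rewrite ?perm_place ?groupV.
Qed.

Lemma coef_pairs_free x g :
  g \in stab_triple -> coef_pairs x != 0 -> pairs_act x g = x -> g = 1%g.
Proof.
case: g x => [[a b] r] [p q]; rewrite !in_setX /= => /andP [/andP [aA bA] rC].
rewrite /coef_pairs /signed_coef mulf_eq0 negb_or /= => /andP [_ /prodf_neq0 nz] [ep eq].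
have r1 : r = 1%g.
  apply/eqP; rewrite -invg_eq1; apply/eqP/permP => j; rewrite perm1.
  apply/eqP; apply: contraT; set i := (r^-1)%g j => nij.
  have [api bqi] : a (p i) = p j /\ b (q i) = q j.
    by split; [move/permP: ep | move/permP: eq] => /(_ j); rewrite !permM.
  have sA : is_a (kdA (tnth s0 (p i))).
    by apply: (stab_on_moved aA); rewrite api (inj_eq perm_inj) eq_sym.
  have tA : is_a (kdV (tnth t0 (q i))).
    by apply: (stab_on_moved bA); rewrite bqi (inj_eq perm_inj) eq_sym.
  have uC : is_c (kdV (tnth u i)).
    apply: (stab_on_moved (groupVr rC)); apply: contra nij => /eqP rii.
    by rewrite -(inj_eq (@perm_inj _ r^-1%g)) rii.
  have := nz i isT; rewrite !tnth_place => /(act_a sA tA) /is_a_c.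
  by rewrite uC.
move: ep eq; rewrite r1 invg1 !mul1g -{2}[p]mulg1 -{2}[q]mulg1.
by move=> /mulgI -> /mulgI ->.
Qed.

Lemma dvdr_tens_act_y_vec :
  dvdr (cfact kdV u)%:R (tens_act kdA kdV act (y_vec R kdA s0) (y_vec R kdV t0) u).
Proof.
have [Q sumQ] := dvdr_sum_free_action (to := pairs_action d) coef_pairs_act coef_pairs_free.
exists Q.
have card_neq0 (G : {group 'S_d}) : #|G|%:R != 0 :> R.
  by case: #|G| (cardG_gt0 G) => // k _; exact: charR.
apply: (@mulfI _ ((#|stab_on s0 predT| * #|stab_on t0 predT|)%:R)).
  by rewrite natrM mulf_neq0 // (card_neq0 (stab_on_group _ _)).
rewrite tens_act_y_vecE mulrCA -mulrA sum_signed_coef_perms pair_big /=.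
have cardC : #|stab_on u (fun j => is_c (kdV j))| = cfact kdV u by rewrite card_stab_on.
rewrite [X in _ * (_ * X)]sumQ /stab_triple !cardsX /= cardC.
by rewrite (card_stab_on_Seq Ss0) (card_stab_on_Seq St0) !natrM; ring.
Qed.
End BasisProducts.

Unset Implicit Arguments.

Theorem lemma3p16 (R : idomainType) (n m d : nat)
  (kdA : 'I_n -> calib) (mulA : 'I_n -> 'I_n -> vect R n) (oneA : vect R n)
  (kdV : 'I_m -> calib) (act : 'I_n -> 'I_m -> vect R m) :
  is_PID R -> char0 R ->
  calibrated_superalgebra kdA mulA oneA ->
  calibrated_supermodule kdA mulA oneA kdV act ->
  forall (eta : tens R n d) (y : tens R m d),
    in_tGamma kdA eta -> in_tGamma kdV y ->
    in_tGamma kdV (tens_act kdA kdV act eta y).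
Proof.
move=> _ charR _ [_ _ act_parity act_a] eta y etaG yG.
have two_neq0 : 2 != 0 :> R by exact: charR 1%N.
apply: supersym_dvd_in_tGamma => //.
  by apply: tens_act_supersym => //; exact: tGamma_supersym.
move: etaG yG => [f ->] [g ->] u.
rewrite tens_act_suml; apply: dvdr_sum => s0 Ss0; apply: dvdr_mull.
rewrite tens_act_sumr; apply: dvdr_sum => t0 St0; apply: dvdr_mull.
exact: dvdr_tens_act_y_vec.
Qed.
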